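(* Let $k>1$, let $f$ be a positive function, differentiable on $[0,1]$, and define $g(R)=\dfrac{k-1}{\frac{k-1}{k}-R}$ for $R\neq\frac{k-1}{k}$. Consider the planar system $$\frac{dI}{d\tau}=I\,[f(R)(1-I-R)-k],\qquad \frac{dR}{d\tau}=(k-1)I-R,$$ and let $(I^*,R^* )$ be an endemic equilibrium of it such that $\frac{df}{dR}(R^* )\neq\frac{dg}{dR}(R^* )$. Then either $(I^*,R^* )$ is locally stable, or there exists another endemic equilibrium point $(\overline{I}^*,\overline{R}^* )$ with $\overline{R}^*>R^*$.
   Context: An endemic equilibrium is an equilibrium point $(I^*,R^* )$ of the system with $I^*>0$. ''Locally stable'' means locally asymptotically stable (both eigenvalues of the Jacobian at the point have negative real part). *)

From Stdlib Require Import Reals Lra.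
From Coquelicot Require Import Coquelicot.
Open Scope R_scope.

Definition F1 (k : R) (f : R -> R) (I Rv : R) : R := I * (f Rv * (1 - I - Rv) - k).
Definition F2 (k : R) (I Rv : R) : R := (k - 1) * I - Rv.

Definition g (k : R) (Rv : R) : R := (k - 1) / ((k - 1) / k - Rv).

Definition is_equilibrium (k : R) (f : R -> R) (I Rv : R) : Prop :=
  F1 k f I Rv = 0 /\ F2 k I Rv = 0.

Definition is_endemic_equilibrium (k : R) (f : R -> R) (I Rv : R) : Prop :=
  is_equilibrium k f I Rv /\ 0 < I.

Definition J11 k f I Rv := Derive (fun x => F1 k f x Rv) I.
Definition J12 k f I Rv := Derive (fun y => F1 k f I y) Rv.
Definition J21 k I Rv := Derive (fun x => F2 k x Rv) I.
Definition J22 k I Rv := Derive (fun y => F2 k I y) Rv.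

Definition is_eigenvalue2 (a b c d : R) (z : C) : Prop :=
  ((RtoC a - z) * (RtoC d - z) - RtoC b * RtoC c)%C = RtoC 0.

Definition locally_stable (k : R) (f : R -> R) (I Rv : R) : Prop :=
  forall z : C,
    is_eigenvalue2 (J11 k f I Rv) (J12 k f I Rv) (J21 k I Rv) (J22 k I Rv) z ->
    Re z < 0.

(** Write [r] for the [R]-coordinate of the equilibrium and [c = (k-1)/k] for
    the pole of [g].  Endemic equilibria are exactly the points [(R/(k-1), R)]
    with [0 < R < c] and [f R = g R].  At such a point the Jacobian has
    negative trace, and its determinant is a positive multiple of
    [g' r - f' r]; so [f' r < g' r] gives stability.  Otherwise [g - f]
    vanishes at [r] with negative slope, hence is negative just right of [r];
    since [g] blows up at [c] while [f] stays bounded on [[r, c]], [g - f]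
    becomes positive again, and the intermediate value theorem yields a second
    crossing beyond [r]. *)

From Stdlib Require Import Reals Lra Psatz Ranalysis5.
From Coquelicot Require Import Coquelicot.
Open Scope R_scope.

Lemma eigenvalue2_Re_lt0 (a b c d : R) (z : C) :
  a + d < 0 -> 0 < a * d - b * c -> is_eigenvalue2 a b c d z -> Re z < 0.
Proof.
  destruct z as [x y]; unfold is_eigenvalue2; simpl; intros Htr Hdet Hz.
  pose proof (f_equal fst Hz) as Hre; pose proof (f_equal snd Hz) as Him.
  unfold Cminus, Cmult, Cplus, Copp, RtoC in Hre, Him; simpl in Hre, Him.
  assert (Hy : y * (2 * x - (a + d)) = 0) by nra.
  destruct (Rmult_integral _ _ Hy) as [Hy0 | Hx].
  - subst y; nra.
  - lra.
Qed.

Lemma ex_derive_continuity_pt (f : R -> R) (x : R) :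
  ex_derive f x -> continuity_pt f x.
Proof.
  intros Hf; apply continuity_pt_filterlim; exact (ex_derive_continuous f x Hf).
Qed.

Lemma next_root_of_neg_derive (h : R -> R) (a q d : R) :
  a < q -> (forall x, a <= x <= q -> continuity_pt h x) ->
  h a = 0 -> is_derive h a d -> d < 0 -> 0 < h q ->
  exists z, a < z < q /\ h z = 0.
Proof.
  intros Haq Hcont Ha Hd Hneg Hq.
  apply is_derive_Reals in Hd.
  destruct (Hd (- d / 2)) as [delta Hdelta]; [lra |].
  pose proof (cond_pos delta) as Hdelta_pos.
  set (e := Rmin (delta / 2) ((q - a) / 2)).
  assert (He : 0 < e) by (apply Rmin_pos; lra).
  assert (He_delta : e <= delta / 2) by apply Rmin_l.
  assert (He_q : e <= (q - a) / 2) by apply Rmin_r.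
  assert (Hp : h (a + e) < 0).
  { assert (Hquot : Rabs ((h (a + e) - h a) / e - d) < - d / 2).
    { apply Hdelta; [lra | rewrite Rabs_pos_eq; lra]. }
    rewrite Ha, Rminus_0_r in Hquot.
    apply Rabs_def2 in Hquot as [Hquot _].
    assert (Hquot_neg : h (a + e) / e < 0) by lra.
    apply Rlt_div_l in Hquot_neg; lra. }
  destruct (IVT_interv h (a + e) q) as [z [Hz Hhz]];
    [intros x Hx; apply Hcont; lra | lra | exact Hp | exact Hq |].
  assert (z <> q) by (intros ->; lra).
  exists z; split; [lra | exact Hhz].
Qed.

Lemma is_derive_g (k x : R) :
  x <> (k - 1) / k -> is_derive (g k) x ((k - 1) / ((k - 1) / k - x) ^ 2).
Proof.
  intros Hx; unfold g; set (c := (k - 1) / k) in *.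
  auto_derive; [lra | field; lra].
Qed.

Lemma g_gt_near_pole (k M a : R) :
  1 < k -> a < (k - 1) / k -> exists q, a < q < (k - 1) / k /\ M < g k q.
Proof.
  intros Hk Ha.
  set (t := Rmin (((k - 1) / k - a) / 2) ((k - 1) / (Rabs M + 1))).
  pose proof (Rabs_pos M) as HM; pose proof (Rle_abs M) as HMabs.
  assert (Ht : 0 < t) by (apply Rmin_pos; [lra | apply Rdiv_lt_0_compat; lra]).
  assert (Ht_a : t <= ((k - 1) / k - a) / 2) by apply Rmin_l.
  assert (Ht_M : t <= (k - 1) / (Rabs M + 1)) by apply Rmin_r.
  exists ((k - 1) / k - t); split; [lra |].
  unfold g; replace ((k - 1) / k - ((k - 1) / k - t)) with t by ring.
  apply Rle_div_r in Ht_M; [| lra].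
  assert (Rabs M + 1 <= (k - 1) / t) by (apply Rle_div_r; lra).
  lra.
Qed.

Lemma exists_f_lt_g_near_pole (k : R) (f : R -> R) (a : R) :
  1 < k -> a < (k - 1) / k ->
  (forall x, a <= x <= (k - 1) / k -> continuity_pt f x) ->
  exists q, a < q < (k - 1) / k /\ f q < g k q.
Proof.
  intros Hk Ha Hf.
  destruct (continuity_ab_maj f a ((k - 1) / k)) as [xmax [Hmax Hxmax]];
    [lra | exact Hf |].
  destruct (g_gt_near_pole k (f xmax) a Hk Ha) as [q [Hq Hgq]].
  exists q; split; [exact Hq |].
  apply Rle_lt_trans with (f xmax); [apply Hmax; lra | exact Hgq].
Qed.

Lemma endemic_equilibrium_on_graph_g (k : R) (f : R -> R) (I Rv : R) :
  1 < k -> 0 < f Rv -> is_endemic_equilibrium k f I Rv ->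
  Rv = (k - 1) * I /\ 0 < Rv < (k - 1) / k /\ f Rv = g k Rv.
Proof.
  unfold is_endemic_equilibrium, is_equilibrium, F1, F2.
  intros Hk Hf [[HF1 HF2] HI].
  assert (HR : Rv = (k - 1) * I) by lra.
  assert (Hfk : f Rv * (1 - k * I) = k).
  { destruct (Rmult_integral _ _ HF1) as [H | H]; [lra | nra]. }
  assert (Hpos : 0 < 1 - k * I) by nra.
  assert (Hpole : (k - 1) / k - Rv = (k - 1) * (1 - k * I) / k)
    by (rewrite HR; field; lra).
  split; [exact HR |]; split.
  - split; [nra |].
    assert (0 < (k - 1) * (1 - k * I) / k) by (apply Rdiv_lt_0_compat; nra).
    lra.
  - unfold g; rewrite Hpole.
    apply (Rmult_eq_reg_r (1 - k * I)); [| lra].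
    rewrite Hfk; field; lra.
Qed.

Lemma endemic_equilibrium_of_graph_g (k : R) (f : R -> R) (Rv : R) :
  1 < k -> 0 < Rv < (k - 1) / k -> f Rv = g k Rv ->
  is_endemic_equilibrium k f (Rv / (k - 1)) Rv.
Proof.
  unfold is_endemic_equilibrium, is_equilibrium, F1, F2, g.
  intros Hk HR Hfg; split; [split |].
  - rewrite Hfg.
    replace (1 - Rv / (k - 1) - Rv) with (k * ((k - 1) / k - Rv) / (k - 1))
      by (field; lra).
    set (c := (k - 1) / k) in *; field; lra.
  - field; lra.
  - apply Rdiv_lt_0_compat; lra.
Qed.

Lemma J11_eq (k : R) (f : R -> R) (I Rv : R) :
  J11 k f I Rv = f Rv * (1 - I - Rv) - k - I * f Rv.
Proof. unfold J11, F1; apply is_derive_unique; auto_derive; auto; ring. Qed.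

Lemma J12_eq (k : R) (f : R -> R) (I Rv : R) :
  ex_derive f Rv -> J12 k f I Rv = I * (Derive f Rv * (1 - I - Rv) - f Rv).
Proof.
  intros Hf; unfold J12, F1; apply is_derive_unique.
  auto_derive; [exact Hf | change (fun x => f x) with f; ring].
Qed.

Lemma J21_eq (k I Rv : R) : J21 k I Rv = k - 1.
Proof. unfold J21, F2; apply is_derive_unique; auto_derive; auto; ring. Qed.

Lemma J22_eq (k I Rv : R) : J22 k I Rv = -1.
Proof. unfold J22, F2; apply is_derive_unique; auto_derive; auto; ring. Qed.

Lemma endemic_equilibrium_locally_stable (k : R) (f : R -> R) (I Rv : R) :
  1 < k -> 0 < f Rv -> is_endemic_equilibrium k f I Rv -> ex_derive f Rv ->
  Derive f Rv < Derive (g k) Rv -> locally_stable k f I Rv.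
Proof.
  intros Hk Hf Heq Hdf Hslope z.
  pose proof Heq as [[HF1 _] HI]; unfold F1 in HF1.
  destruct (endemic_equilibrium_on_graph_g k f I Rv Hk Hf Heq)
    as [HR [[HR0 Hpole] Hfg]].
  set (u := (k - 1) / k - Rv); assert (Hu : 0 < u) by (unfold u; lra).
  rewrite (is_derive_unique _ _ _ (is_derive_g k Rv ltac:(lra))) in Hslope.
  fold u in Hslope.
  assert (Hfu : f Rv * u = k - 1) by (rewrite Hfg; unfold g; fold u; field; lra).
  assert (HfI : f Rv * (1 - I - Rv) = k).
  { destruct (Rmult_integral _ _ HF1) as [H | H]; lra. }
  rewrite J11_eq, J12_eq, J21_eq, J22_eq by exact Hdf; rewrite HfI.
  apply eigenvalue2_Re_lt0; [nra |].
  (* by [Hfu], this determinant is [I k u (g' Rv - f' Rv)] *)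
  assert (Hdet : (k - k - I * f Rv) * -1
                 - I * (Derive f Rv * (1 - I - Rv) - f Rv) * (k - 1)
                 = I * k * (f Rv - Derive f Rv * u)).
  { unfold u; rewrite HR; field; lra. }
  rewrite Hdet.
  assert (Derive f Rv * u < f Rv).
  { apply Rlt_div_r in Hslope; [| nra].
    apply (Rmult_lt_reg_r u); [exact Hu |]; nra. }
  apply Rmult_lt_0_compat; nra.
Qed.

Lemma next_endemic_equilibrium (k : R) (f : R -> R) (Rv : R) :
  1 < k -> 0 < Rv < (k - 1) / k -> f Rv = g k Rv ->
  (forall x, Rv <= x <= (k - 1) / k -> ex_derive f x) ->
  Derive (g k) Rv < Derive f Rv ->
  exists Rbar, Rv < Rbar < (k - 1) / k /\ f Rbar = g k Rbar.
Proof.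
  intros Hk HR Hfg Hdf Hslope.
  set (h := fun x => g k x - f x).
  assert (Hcont_f : forall x, Rv <= x <= (k - 1) / k -> continuity_pt f x)
    by (intros x Hx; apply ex_derive_continuity_pt, Hdf, Hx).
  destruct (exists_f_lt_g_near_pole k f Rv Hk ltac:(lra) Hcont_f) as [q [Hq Hfq]].
  assert (Hdg : forall x, x < (k - 1) / k -> is_derive (g k) x (Derive (g k) x)).
  { intros x Hx; apply Derive_correct; eexists; apply is_derive_g; lra. }
  destruct (next_root_of_neg_derive h Rv q (Derive (g k) Rv - Derive f Rv))
    as [Rbar [HRbar Hh]].
  - lra.
  - intros x Hx; apply continuity_pt_minus; [| apply Hcont_f; lra].
    apply ex_derive_continuity_pt; eexists; apply Hdg; lra.
  - unfold h; lra.
  - exact (is_derive_minus (g k) f Rv _ _ (Hdg Rv ltac:(lra))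
             (Derive_correct f Rv (Hdf Rv ltac:(lra)))).
  - lra.
  - unfold h; lra.
  - exists Rbar; split; [lra | unfold h in Hh; lra].
Qed.

Theorem proposition1 (k : R) (f : R -> R) (Istar Rstar : R) :
  1 < k ->
  (forall x, 0 < f x) ->
  (forall x, 0 <= x <= 1 -> ex_derive f x) ->
  is_endemic_equilibrium k f Istar Rstar ->
  Derive f Rstar <> Derive (g k) Rstar ->
  locally_stable k f Istar Rstar \/
  exists Ibar Rbar, is_endemic_equilibrium k f Ibar Rbar /\ Rstar < Rbar.
Proof.
  intros Hk Hf Hdf Heq Hslope.
  destruct (endemic_equilibrium_on_graph_g k f Istar Rstar Hk (Hf Rstar) Heq)
    as [_ [HR Hfg]].
  assert (Hpole : (k - 1) / k < 1) by (apply Rlt_div_l; lra).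
  destruct (Rlt_or_le (Derive f Rstar) (Derive (g k) Rstar)) as [Hlt | Hge].
  - left; apply endemic_equilibrium_locally_stable; auto.
    apply Hdf; lra.
  - right.
    destruct (next_endemic_equilibrium k f Rstar Hk HR Hfg) as [Rbar [HRbar Hfg']].
    + intros x Hx; apply Hdf; lra.
    + lra.
    + exists (Rbar / (k - 1)), Rbar; split; [| lra].
      apply endemic_equilibrium_of_graph_g; auto; lra.
Qed.
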